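(* Let $G$ be a claw-free graph and $C$ an even hole of length $2k$ with $k>2$, labelled $C=\mathbf{b}_0-\mathbf{a}_0-\mathbf{b}_1-\mathbf{a}_1-\dots-\mathbf{b}_{k-1}-\mathbf{a}_{k-1}-\mathbf{b}_0$. Let $\mathbf{s}\notin C$ with $\Gamma_C(\mathbf{s})=\{\mathbf{b}_0,\mathbf{a}_0,\mathbf{b}_1\}$. If a vertex $\mathbf{t}\notin C\cup\{\mathbf{s}\}$ is adjacent to at least one of $\mathbf{s},\mathbf{a}_0$ and to both $\mathbf{b}_0$ and $\mathbf{b}_1$, then $\mathbf{t}$ is adjacent to both $\mathbf{s}$ and $\mathbf{a}_0$.
   Context: A hole is an induced cycle of length at least 4; an even hole has even length. Claw-free: no induced $K_{1,3}$. $\Gamma_C(\mathbf{s})$ is the set of neighbours of $\mathbf{s}$ in $C$. *)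

From mathcomp Require Import all_boot.
Set Implicit Arguments. Unset Strict Implicit. Unset Printing Implicit Defensive.

Definition simple_graph (T : finType) (e : rel T) : Prop :=
  symmetric e /\ irreflexive e.

Definition claw_free (T : finType) (e : rel T) : Prop :=
  ~ exists w x y z : T,
      [/\ e w x, e w y & e w z] /\
      [/\ x != y, x != z & y != z] /\
      [/\ ~~ e x y, ~~ e x z & ~~ e y z].

Definition induced_cycle (T : finType) (e : rel T) (n : nat) (c : nat -> T) : Prop :=
  (forall i j, i < n -> j < n -> c i = c j -> i = j) /\
  (forall i j, i < n -> j < n ->
     e (c i) (c j) = (j == (i + 1) %% n) || (i == (j + 1) %% n)).

Definition is_hole (T : finType) (e : rel T) (n : nat) (c : nat -> T) : Prop :=
  4 <= n /\ induced_cycle e n c.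

(* Both s and a0 are common neighbours of b0 and b1 that miss the outer cycle
   neighbours p = a_(k-1) of b0 and q = a_1 of b1.  If t sees b0, b1 and one of
   them, say y, but misses the other, x, then the claws at b0 and b1 centred
   there force t to see p and q; since k > 2 the vertices p, q, y are pairwise
   non-adjacent, so they form a claw centred at t. *)

From mathcomp Require Import all_boot zify.

Set Implicit Arguments.
Unset Strict Implicit.
Unset Printing Implicit Defensive.

Section ClawFree.

Variables (T : finType) (e : rel T).
Hypotheses (e_sym : symmetric e) (e_claw_free : claw_free e).

Lemma claw_free_adj (w x y z : T) :
  e x w -> e y w -> e z w -> x != y -> x != z -> y != z ->
  ~~ e x y -> ~~ e x z -> e y z.
Proof.
move=> xw yw zw xy xz yz nxy nxz; apply/negPn/negP => nyz.
by apply: e_claw_free; exists w, x, y, z; rewrite !(e_sym w).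
Qed.

Lemma adj_neq {u x y : T} : e x u -> ~~ e y u -> x != y.
Proof. by move=> xu; apply: contraNneq => <-. Qed.

Variables (p b0 b1 q : T).
Hypotheses (p_b0 : e p b0) (b1_q : e b1 q).
Hypotheses (b0_q : ~~ e b0 q) (p_b1 : ~~ e p b1) (p_q : ~~ e p q).

Definition apex (x : T) := [&& e x b0, e x b1, ~~ e x p & ~~ e x q].

Lemma apex_adj (x y t : T) :
  apex x -> apex y -> e t b0 -> e t b1 -> t != x -> e t y -> e t x.
Proof.
case/and4P=> x_b0 x_b1 x_p x_q /and4P[y_b0 y_b1 y_p y_q] t_b0 t_b1 tx t_y.
have q_b0 : ~~ e q b0 by rewrite e_sym.
have q_b1 : e q b1 by rewrite e_sym.
have [x_ne_p x_ne_q] : x != p /\ x != q.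
  by rewrite (adj_neq x_b1 p_b1) (adj_neq x_b0 q_b0).
have [y_ne_p y_ne_q] : y != p /\ y != q.
  by rewrite (adj_neq y_b1 p_b1) (adj_neq y_b0 q_b0).
have [t_ne_p t_ne_q] : t != p /\ t != q.
  by split; apply: (adj_neq t_y); rewrite e_sym.
have p_ne_q : p != q by rewrite (adj_neq p_b0 q_b0).
apply/negPn/negP => t_x.
have [x_t x_ne_t] : ~~ e x t /\ x != t by rewrite e_sym eq_sym.
have t_p := claw_free_adj x_b0 t_b0 p_b0 x_ne_t x_ne_p t_ne_p x_t x_p.
have t_q := claw_free_adj x_b1 t_b1 q_b1 x_ne_t x_ne_q t_ne_q x_t x_q.
rewrite !(e_sym t) in t_y t_p t_q.
exact: (negP p_q) (claw_free_adj t_y t_p t_q y_ne_p y_ne_q p_ne_q y_p y_q).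
Qed.

End ClawFree.

Lemma induced_cycle_adjE (T : finType) (e : rel T) (n : nat) (c : nat -> T) :
  induced_cycle e n c -> forall i j, i < n -> j < n ->
  e (c i) (c j) =
    [|| j == i.+1, i == j.+1, (i == n.-1) && (j == 0) | (j == n.-1) && (i == 0)].
Proof.
have succ_mod m : m < n -> (m + 1) %% n = if m.+1 == n then 0 else m.+1.
  move=> lt_mn; case: eqP => [<-|ne_mn]; first by rewrite addn1 modnn.
  by rewrite modn_small //; lia.
move=> [_ adj] i j lt_in lt_jn; rewrite adj // !succ_mod //.
by case: ifP => ?; case: ifP => ?; lia.
Qed.

Theorem corollary4 (T : finType) (e : rel T) (k : nat) (c : nat -> T) (s t : T) :
  simple_graph e -> claw_free e ->
  2 < k -> is_hole e (2 * k) c ->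
  (forall i, i < 2 * k -> s != c i) ->
  (forall i, i < 2 * k -> e s (c i) = (i <= 2)) ->
  (forall i, i < 2 * k -> t != c i) -> t != s ->
  (e t s || e t (c 1)) -> e t (c 0) -> e t (c 2) ->
  e t s && e t (c 1).
Proof.
move=> [e_sym _] e_claw_free lt2k [_ hole] _ s_adj t_C ts t_s_a0 t_b0 t_b1.
have lt5n : 5 < 2 * k by lia.
have adj := induced_cycle_adjE hole.
have apex_a0 : apex e (c (2 * k).-1) (c 0) (c 2) (c 3) (c 1).
  by rewrite /apex !adj //; lia.
have apex_s : apex e (c (2 * k).-1) (c 0) (c 2) (c 3) s.
  by rewrite /apex !s_adj //; lia.
have [p_b0 b1_q b0_q p_b1 p_q] : [/\ e (c (2 * k).-1) (c 0), e (c 2) (c 3),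
    ~~ e (c 0) (c 3), ~~ e (c (2 * k).-1) (c 2) & ~~ e (c (2 * k).-1) (c 3)].
  by split; rewrite adj //; lia.
have apex_adjC := apex_adj e_sym e_claw_free p_b0 b1_q b0_q p_b1 p_q.
case/orP: t_s_a0 => [t_s | t_a0]; rewrite ?t_s ?t_a0 ?andbT.
- by apply: (apex_adjC _ _ _ apex_a0 apex_s t_b0 t_b1 _ t_s); apply: t_C; lia.
- exact: (apex_adjC _ _ _ apex_s apex_a0 t_b0 t_b1 ts t_a0).
Qed.
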